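(* With the notation of the context, for every $i\in\{1,\dots,n\}$: (1) if the indecomposable module $L(i,k)$ exists, then $0<k<2n$; (2) $\ell(P_i)=n+\inf\{r\in\mathbb{N}\mid\sigma^r(i)\in\Delta\}$; in particular $n\leqslant\ell(P_i)<2n$; (3) if $n\leqslant k<\ell(P_i)$, then $\ell(P_{\sigma^k(i)})=\ell(P_i)-(k-n)$; (4) if $0<k<\ell(P_i)$, then $\Omega(L(i,k))\cong L(\sigma^k(i),\ell(P_i)-k)$.
   Context: Let $K$ be a field, $n\geqslant2$, $Q$ the cyclic quiver with vertices $1,\dots,n$ and arrows $\alpha_i:i\to i+1$ ($1\leqslant i\leqslant n-1$), $\alpha_n:n\to1$, paths composed right to left. Let $\rho_1=\alpha_n\cdots\alpha_1$ and $\rho_i=\alpha_{i-1}\cdots\alpha_1\alpha_n\cdots\alpha_i$ for $2\leqslant i\leqslant n$. Fix $1\leqslant m\leqslant n$ and $\Delta=\{\lambda_1<\cdots<\lambda_m\}\subseteq\{1,\dots,n\}$, and let $A_{n,m}=KQ/\langle\rho_\lambda:\lambda\in\Delta\rangle$, with Jacobson radical $J$. Modules are finitely generated left $A_{n,m}$-modules. $e_i$ is the idempotent at vertex $i$, $P_i=A_{n,m}e_i$, $S_i=P_i/Je_i$. The Loewy length is $\ell(M)=\min\{s\geqslant1: J^sM=0\}$. $L(i,k)$ denotes the indecomposable module with top $S_i$ and Loewy length $k$ (i.e. $P_i/J^kP_i$ for $1\leqslant k\leqslant\ell(P_i)$). $\sigma$ is the permutation of $\{1,\dots,n\}$ with $\sigma(i)=i+1$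 for $i<n$ and $\sigma(n)=1$; $\sigma^r$ its $r$-th power, $\sigma^0=\mathrm{id}$. $\Omega(M)$ is the kernel of a projective cover of $M$. *)

(* Modules over A_{n,m} = KQ/<rho_lambda> are encoded as
   finite-dimensional representations of the cyclic quiver Q bound by the
   relations rho_lambda (lambda in Delta).  Vertices 1..n are 'I_n (vertex v
   is the ordinal v-1); sigma is the cyclic successor ordS. Row-vector
   convention: the arrow alpha_i : i -> sigma i acts by v |-> v *m mor M i. *)
From HB Require Import structures.
From mathcomp Require Import all_boot all_algebra.
Set Implicit Arguments. Unset Strict Implicit. Unset Printing Implicit Defensive.
Import GRing.Theory.
Local Open Scope ring_scope.

Section Nakayama.
Variable K : fieldType.
Variable n : nat.

Definition sigma (i : 'I_n) : 'I_n := ordS i.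

Record rep := Rep {
  dimv : 'I_n -> nat;
  mor : forall i : 'I_n, 'M[K]_(dimv i, dimv (sigma i)) }.

Fixpoint pathmx (M : rep) (s : nat) (i : 'I_n)
  : 'M[K]_(dimv M i, dimv M (iter s sigma i)) :=
  match s return 'M[K]_(dimv M i, dimv M (iter s sigma i)) with
  | 0 => 1%:M
  | s'.+1 => pathmx M s' i *m mor M (iter s' sigma i)
  end.

(* M is an A_{n,m}-module: every rho_lambda (lambda in Delta) acts as 0;
   rho_lambda is the path of length n starting (and ending) at lambda *)
Definition is_mod (Delta : {set 'I_n}) (M : rep) : Prop :=
  forall l, l \in Delta -> pathmx M n l = 0.

Definition homT (M N : rep) := forall i : 'I_n, 'M[K]_(dimv M i, dimv N i).
Definition is_hom (M N : rep) (f : homT M N) : Prop :=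
  forall i, mor M i *m f (sigma i) = f i *m mor N i.
Definition hom_surj (M N : rep) (f : homT M N) : Prop :=
  forall i, row_full (f i).
Definition hom_inj (M N : rep) (f : homT M N) : Prop :=
  forall i, row_free (f i).

Definition subT (M : rep) := forall i : 'I_n, 'M[K]_(dimv M i).
Definition is_sub (M : rep) (U : subT M) : Prop :=
  forall i, (U i *m mor M i <= U (sigma i))%MS.

Definition indecomposable (M : rep) : Prop :=
  (exists i, 0 < dimv M i)%N /\
  forall U V : subT M, is_sub U -> is_sub V ->
    (forall i, (U i + V i == 1%:M)%MS && (U i :&: V i == (0 : 'M[K]_(dimv M i)))%MS) ->
    (forall i, (U i == (0 : 'M[K]_(dimv M i)))%MS) \/
    (forall i, (V i == (0 : 'M[K]_(dimv M i)))%MS).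

(* J^s M = 0 : J is the arrow ideal (= Jacobson radical of A_{n,m}),
   J^s M is spanned by the images of the paths of length s *)
Definition Jpow_zero (M : rep) (s : nat) : Prop :=
  forall i, pathmx M s i = 0.

Definition loewy_length (M : rep) (k : nat) : Prop :=
  (1 <= k)%N /\ Jpow_zero M k /\ forall s, (1 <= s < k)%N -> ~ Jpow_zero M s.

Definition simple_rep (i : 'I_n) : rep :=
  @Rep (fun j => nat_of_bool (j == i)) (fun j => 0).

(* top M = M/JM is isomorphic to S_i: there is an epimorphism M -> S_i whose
   kernel is JM; (JM) at vertex sigma j is the image of alpha_j *)
Definition top_is (i : 'I_n) (M : rep) : Prop :=
  exists f : homT M (simple_rep i),
    is_hom f /\ hom_surj f /\
    forall j, (kermx (f (sigma j)) == mor M j)%MS.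

Definition isL (Delta : {set 'I_n}) (i : 'I_n) (k : nat) (M : rep) : Prop :=
  is_mod Delta M /\ indecomposable M /\ top_is i M /\ loewy_length M k.

(* P is (isomorphic to) P_i = A e_i: it represents the functor M |-> e_i M,
   i.e. there is x in e_i P such that for every module M and m in e_i M there
   is a unique homomorphism P -> M sending x to m (Yoneda) *)
Definition is_Pe (Delta : {set 'I_n}) (i : 'I_n) (P : rep) : Prop :=
  is_mod Delta P /\
  exists x : 'rV[K]_(dimv P i),
    forall (M : rep), is_mod Delta M -> forall m : 'rV[K]_(dimv M i),
      (exists f : homT P M, is_hom f /\ x *m f i = m) /\
      (forall f g : homT P M, is_hom f -> is_hom g ->
         x *m f i = m -> x *m g i = m -> forall j, f j = g j).

Definition is_proj (Delta : {set 'I_n}) (P : rep) : Prop :=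
  is_mod Delta P /\
  forall (X Y : rep) (g : homT X Y) (h : homT P Y),
    is_mod Delta X -> is_mod Delta Y ->
    is_hom g -> hom_surj g -> is_hom h ->
    exists h' : homT P X, is_hom h' /\ forall j, h' j *m g j = h j.

Definition proj_cover (Delta : {set 'I_n}) (P M : rep) (p : homT P M) : Prop :=
  is_proj Delta P /\ is_hom p /\ hom_surj p /\
  forall U : subT P, is_sub U ->
    (forall j, (U j + kermx (p j) == 1%:M)%MS) -> forall j, (U j == 1%:M)%MS.

End Nakayama.

(* Every module is killed by the paths of length n + r(j) out of j, r(j) being the least
   r with sigma^r(j) in Delta.  The Yoneda property maps P_j onto the chain module of
   length n + r(j), so its generator survives the path of length n + r(j) - 1 and
   l(P_j) = n + r(j).  By Nakayama, a module with simple top S_j is generated by any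
   vector outside its radical at j.  In a projective cover p : Q -> L(i,k), a lift q of
   such a generator generates Q and survives the paths of length < l(P_i), and ker p is
   generated by the image of q under the path of length k; so ker p has top S_(sigma^k(i))
   and Loewy length l(P_i) - k.  Part (3) is r(sigma^t(j)) = r(j) - t for t <= r(j). *)

From Pilot Require Import Defs.
From HB Require Import structures.
From mathcomp Require Import all_boot all_algebra zify.
Set Implicit Arguments. Unset Strict Implicit. Unset Printing Implicit Defensive.
Import GRing.Theory.
Local Open Scope ring_scope.

(* [vector] also defines a [dimv]. *)
Local Notation dimv := Defs.dimv.

Section Paths.
Variables (K : fieldType) (n : nat).
Implicit Types (M N : rep K n) (a b c v : 'I_n).
Local Notation sg := (@sigma n).

Lemma iter_sigma_val t v : val (iter t sg v) = ((v + t) %% n)%N.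
Proof.
elim: t => [|t IH] /=; first by rewrite addn0 modn_small.
by rewrite /sigma /ordS /= IH -[((_ %% n).+1)]addn1 modnDml addn1 addnS.
Qed.

Lemma iter_sigma_inj t : injective (iter t sg).
Proof. by elim: t => [//|t IH] a b /= /ordS_inj; apply: IH. Qed.

Lemma iter_sigma_n v : iter n sg v = v.
Proof. by apply: val_inj; rewrite iter_sigma_val modnDr modn_small. Qed.

Lemma sigma_surj v : exists w, sg w = v.
Proof. by exists (ord_pred v); rewrite /sigma ord_predK. Qed.

(* The identity between the fibres at [a] and [b] when [a = b], and zero otherwise:
   it identifies fibres at equal but not convertible vertices, such as
   [iter (s + t) sg v] and [iter t sg (iter s sg v)]. *)
Definition castv M a b : 'M[K]_(dimv M a, dimv M b) :=
  \matrix_(x, y) ((a == b) && (val x == val y))%:R.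

Lemma castv_id M a : castv M a a = 1%:M.
Proof. by apply/matrixP => x y; rewrite !mxE eqxx. Qed.

Lemma castv_neq M a b : a != b -> castv M a b = 0.
Proof. by move=> neq_ab; apply/matrixP => x y; rewrite !mxE (negPf neq_ab). Qed.

Lemma castv_mor M a b :
  castv M a b *m mor M b = mor M a *m castv M (sg a) (sg b).
Proof.
have [<-|neq_ab] := eqVneq a b; first by rewrite !castv_id mul1mx mulmx1.
rewrite !castv_neq ?mul0mx ?mulmx0 //.
by apply: contra neq_ab => /eqP /ordS_inj ->.
Qed.

Lemma castv_pathmx M s a b :
  castv M a b *m pathmx M s b = pathmx M s a *m castv M (iter s sg a) (iter s sg b).
Proof.
have [<-|neq_ab] := eqVneq a b; first by rewrite !castv_id mul1mx mulmx1.
rewrite !castv_neq ?mul0mx ?mulmx0 //.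
by apply: contra neq_ab => /eqP /iter_sigma_inj ->.
Qed.

Lemma castv_hom M N (f : homT M N) a b : castv M a b *m f b = f a *m castv N a b.
Proof.
have [<-|neq_ab] := eqVneq a b; first by rewrite !castv_id mul1mx mulmx1.
by rewrite !castv_neq ?mul0mx ?mulmx0.
Qed.

Lemma castvM M a b c : a = b -> castv M a b *m castv M b c = castv M a c.
Proof. by move=> <-; rewrite castv_id mul1mx. Qed.

Lemma mulmx_castv_eq0 M m a b (A : 'M[K]_(m, dimv M a)) :
  a = b -> (A *m castv M a b == 0) = (A == 0).
Proof. by move=> <-; rewrite castv_id mulmx1. Qed.

Lemma castv_sub M m (F : forall a, 'M[K]_(m, dimv M a)) a b :
  (F a *m castv M a b <= F b)%MS.
Proof.
have [<-|neq_ab] := eqVneq a b; first by rewrite castv_id mulmx1.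
by rewrite castv_neq ?mulmx0 ?sub0mx.
Qed.

Lemma pathmxD M s t v :
  pathmx M s v *m pathmx M t (iter s sg v) =
  pathmx M (t + s) v *m castv M (iter (t + s) sg v) (iter t sg (iter s sg v)).
Proof.
elim: t => [|t IH] /=; first by rewrite castv_id !mulmx1.
by rewrite mulmxA IH -mulmxA castv_mor mulmxA.
Qed.

Lemma pathmxSl M s v :
  pathmx M s.+1 v =
  mor M v *m pathmx M s (sg v) *m castv M (iter s sg (sg v)) (iter s.+1 sg v).
Proof.
elim: s => [|s IH]; first by rewrite /= castv_id mul1mx !mulmx1.
rewrite -[pathmx M s.+2 v]/(pathmx M s.+1 v *m _) IH -!mulmxA castv_mor.
by rewrite !mulmxA.
Qed.

Lemma mulmx_pathmx0_leq M m v s s' (A : 'M[K]_(m, dimv M v)) :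
  A *m pathmx M s v = 0 -> (s <= s')%N -> A *m pathmx M s' v = 0.
Proof.
move=> As0 /subnK <-; elim: (s' - s)%N => [|t IH] //=.
by rewrite mulmxA IH mul0mx.
Qed.

Lemma pathmx0_leq M v s s' : pathmx M s v = 0 -> (s <= s')%N -> pathmx M s' v = 0.
Proof.
by move=> s0 le_ss'; rewrite -[pathmx M s' v]mul1mx (mulmx_pathmx0_leq _ le_ss') ?mul1mx.
Qed.

Lemma hom_pathmx M N (f : homT M N) s v : is_hom f ->
  f v *m pathmx N s v = pathmx M s v *m f (iter s sg v).
Proof.
move=> hom_f; elim: s => [|s IH] /=; first by rewrite mulmx1 mul1mx.
by rewrite mulmxA IH -!mulmxA hom_f.
Qed.

End Paths.

Section FirstVertexInDelta.
Variables (n : nat) (Delta : {set 'I_n}).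
Hypothesis Delta_neq0 : Delta != set0.
Implicit Types (j v : 'I_n).
Local Notation sg := (@sigma n).

(* The paper's inf {r | sigma^r(j) \in Delta}; searching [0, n) suffices because
   sigma^n = id. *)
Definition rDelta j : nat := find (fun t => iter t sg j \in Delta) (iota 0 n).

Lemma n_gt0 : (0 < n)%N.
Proof. by have [l _] := set0Pn _ Delta_neq0; apply: leq_ltn_trans (ltn_ord l). Qed.

Lemma has_rDelta j : has (fun t => iter t sg j \in Delta) (iota 0 n).
Proof.
have [l l_Delta] := set0Pn _ Delta_neq0.
apply/hasP; exists ((l + (n - j)) %% n)%N; first by rewrite mem_iota ltn_mod n_gt0.
suff -> : iter ((l + (n - j)) %% n) sg j = l by [].
apply: val_inj; rewrite iter_sigma_val /= modnDmr addnCA subnKC ?(ltnW (ltn_ord j)) //.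
by rewrite modnDr modn_small.
Qed.

Lemma rDelta_lt j : (rDelta j < n)%N.
Proof. by have := has_rDelta j; rewrite has_find size_iota. Qed.

Lemma rDelta_in j : iter (rDelta j) sg j \in Delta.
Proof. by have := nth_find 0%N (has_rDelta j); rewrite nth_iota ?rDelta_lt. Qed.

Lemma rDelta_min j t : iter t sg j \in Delta -> (rDelta j <= t)%N.
Proof.
move=> tDelta; rewrite leqNgt; apply/negP => lt_t.
have := before_find 0%N lt_t; rewrite nth_iota ?tDelta //.
exact: ltn_trans lt_t (rDelta_lt j).
Qed.

Lemma rDelta_iter j t : (t <= rDelta j)%N -> rDelta (iter t sg j) = (rDelta j - t)%N.
Proof.
move=> le_t; apply/eqP; rewrite eqn_leq; apply/andP; split.
  by apply: rDelta_min; rewrite -iterD subnK ?rDelta_in.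
by have := rDelta_in (iter t sg j); rewrite -iterD => /rDelta_min; lia.
Qed.

Variable K : fieldType.
Implicit Types (M : rep K n).

Lemma mod_pathmx_rDelta M j : is_mod Delta M -> pathmx M (n + rDelta j) j = 0.
Proof.
move=> modM; have := pathmxD M (rDelta j) n j.
rewrite (modM _ (rDelta_in j)) mulmx0 => /esym/eqP.
by rewrite mulmx_castv_eq0 ?iterD // => /eqP.
Qed.

Lemma mod_pathmx_long M s v : is_mod Delta M -> (2 * n <= s.+1)%N -> pathmx M s v = 0.
Proof.
move=> modM le_s; apply: (pathmx0_leq (mod_pathmx_rDelta v modM)).
by have := rDelta_lt v; lia.
Qed.

Lemma loewy_length_uniq M a b : loewy_length M a -> loewy_length M b -> a = b.
Proof.
move=> [a_gt0 [Ja a_min]] [b_gt0 [Jb b_min]].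
by case: (ltngtP a b) => // lt; [case: (b_min a) | case: (a_min b)]; rewrite ?a_gt0 ?b_gt0.
Qed.

Lemma mod_loewy_length_lt M k : is_mod Delta M -> loewy_length M k -> (0 < k < 2 * n)%N.
Proof.
move=> modM [k_gt0 [_ k_min]]; rewrite k_gt0 ltnNge; apply/negP => le_k.
apply: (k_min (2 * n).-1); first by have := n_gt0; lia.
by move=> v; apply: (mod_pathmx_long v modM); lia.
Qed.

End FirstVertexInDelta.

Lemma sum_ord_muln_eq (V : nmodType) L p (F : nat -> V) :
  \sum_(b < L) F b *+ (b == p :> nat) = if (p < L)%N then F p else 0.
Proof.
case: ifP => lt_pL.
  rewrite (bigD1 (Ordinal lt_pL)) //= eqxx mulr1n big1 ?addr0 // => b neq_b.
  rewrite (_ : (b == p :> nat) = false) ?mulr0n //.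
  by apply: contraNF neq_b => /eqP eq_b; apply/eqP/val_inj.
rewrite big1 // => b _; rewrite (_ : (b == p :> nat) = false) ?mulr0n //.
by apply/negbTE/eqP => eq_b; move: lt_pL; rewrite -eq_b ltn_ord.
Qed.

Section ChainRep.
Variables (K : fieldType) (n : nat).
Implicit Types (j v : 'I_n).
Local Notation sg := (@sigma n).

(* Basis e_0, ..., e_(L-1) at every vertex; the arrow out of v sends e_a to e_(a+1)
   when sigma^a j = v and to 0 otherwise.  The e_a at the vertices sigma^a j span a
   uniserial summand, and a homomorphism out of [chain_rep j L] is determined by the
   image of e_0 at j (see [gen_hom]). *)
Definition chain_rep j L : rep K n :=
  Rep (fun v => \matrix_(a < L, b < L) ((b == a.+1 :> nat) && (iter a sg j == v))%:R).

Lemma chain_rep_pathmx j L s v :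
  pathmx (chain_rep j L) s v =
  \matrix_(a < L, b < L) ((b == (a + s)%N :> nat) && ((s == 0)%N || (iter a sg j == v)))%:R.
Proof.
elim: s => [|s IH]; first by apply/matrixP => a b; rewrite /= !mxE addn0 andbT eq_sym.
apply/matrixP => a c.
rewrite -[pathmx _ s.+1 v]/(pathmx _ s v *m _) IH !mxE /=.
under eq_bigr => b _ do rewrite !mxE -mulnb natrM -mulrA mulr_natl.
rewrite (sum_ord_muln_eq _ _ (fun b => ((s == 0)%N || (iter a sg j == v))%:R *
  ((c == b.+1 :> nat) && (iter b sg j == iter s sg v))%:R)).
case: ifP => lt_asL.
  rewrite -natrM addnC iterD (inj_eq (@iter_sigma_inj _ s)) addnS addnC.
  by case: (iter a sg j == v); rewrite ?andbF ?orbT ?muln0 ?mul1n.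
rewrite (_ : (c == _ :> nat) = false) //; apply/eqP => eq_c.
by move: (ltn_ord c) lt_asL; rewrite eq_c /=; lia.
Qed.

Lemma delta_mx_chain_rep_pathmx j L s (L_gt0 : (0 < L)%N) (lt_sL : (s < L)%N) :
  (delta_mx 0 (Ordinal L_gt0) : 'rV[K]_L) *m pathmx (chain_rep j L) s j =
  delta_mx 0 (Ordinal lt_sL).
Proof.
rewrite -rowE chain_rep_pathmx; apply/rowP => b.
by rewrite !mxE /= add0n eqxx orbT andbT.
Qed.

Lemma chain_rep_is_mod (Delta : {set 'I_n}) j L :
  Delta != set0 -> (L <= n + rDelta Delta j)%N -> is_mod Delta (chain_rep j L).
Proof.
move=> Delta_neq0 le_L l l_Delta; rewrite chain_rep_pathmx; apply/matrixP => a b.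
rewrite !mxE (_ : n == 0 = false); last by have := n_gt0 Delta_neq0; lia.
have [eq_al|] := eqVneq (iter a sg j) l; rewrite ?andbF //=.
have := @rDelta_min _ Delta Delta_neq0 j a; rewrite eq_al => /(_ l_Delta) le_r.
rewrite (_ : (b == _ :> nat) = false) //; apply/eqP => eq_b.
by move: (ltn_ord b); rewrite eq_b => /leq_trans/(_ le_L); rewrite addnC ltn_add2l ltnNge le_r.
Qed.

End ChainRep.
Arguments chain_rep {K n} j L.

Section GeneratedHom.
Variables (K : fieldType) (n : nat).
Implicit Types (M N : rep K n) (j u v w : 'I_n).
Local Notation sg := (@sigma n).

(* When the path of length [T]
   kills [m], the rows span the submodule generated by [m] and [gen_hom T m] is the
   homomorphism [chain_rep j T -> M] sending e_0 to [m]. *)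
Definition gen_hom M j T (m : 'rV[K]_(dimv M j)) v : 'M[K]_(T, dimv M v) :=
  \matrix_(a < T) (m *m pathmx M a j *m castv M (iter a sg j) v).

Definition generates M j T (m : 'rV[K]_(dimv M j)) : Prop :=
  forall v, (1%:M <= gen_hom T m v)%MS.

Lemma gen_hom_row M j T (m : 'rV[K]_(dimv M j)) v (a : 'I_T) :
  row a (gen_hom T m v) = m *m pathmx M a j *m castv M (iter a sg j) v.
Proof. by rewrite rowK. Qed.

Lemma row0_gen_hom M j T (m : 'rV[K]_(dimv M j)) (T_gt0 : (0 < T)%N) :
  row (Ordinal T_gt0) (gen_hom T m j) = m.
Proof. by rewrite gen_hom_row /= castv_id !mulmx1. Qed.

Lemma gen_hom_row_pathmx M j T (m : 'rV[K]_(dimv M j)) v s (a : 'I_T) :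
  row a (gen_hom T m v *m pathmx M s v) =
  m *m pathmx M (s + a) j *m castv M (iter (s + a) sg j) (iter s sg v).
Proof.
rewrite row_mul gen_hom_row -!mulmxA castv_pathmx [pathmx M a j *m _]mulmxA pathmxD.
by rewrite -!mulmxA castvM // iterD.
Qed.

Lemma gen_hom_is_hom M j T (m : 'rV[K]_(dimv M j)) : m *m pathmx M T j = 0 ->
  is_hom (gen_hom T m : homT (chain_rep j T) M).
Proof.
move=> mT0 v; apply/row_matrixP => a; rewrite row_mul mulmx_sum_row.
under eq_bigr => b _ do rewrite !mxE gen_hom_row -mulnb natrM -scalerA scaler_nat.
rewrite (sum_ord_muln_eq _ _ (fun b => (iter a sg j == v)%:R *:
   (m *m pathmx M b j *m castv M (iter b sg j) (sg v)))).
rewrite [in RHS]row_mul [in RHS]gen_hom_row -[in RHS]mulmxA castv_mor [in RHS]mulmxA.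
rewrite -[m *m pathmx M a j *m _]mulmxA -[pathmx M a j *m _]/(pathmx M a.+1 j).
have [av|nav] := eqVneq (iter a sg j) v; last first.
  rewrite scale0r castv_neq ?mulmx0; last by apply: contra nav => /eqP/ordS_inj ->.
  by case: ifP.
rewrite scale1r; case: ifP => // /negbT; rewrite -leqNgt => le_T.
by rewrite (mulmx_pathmx0_leq mT0 le_T) mul0mx.
Qed.

Lemma gen_hom_hom M N (f : homT M N) j T (m : 'rV[K]_(dimv M j)) v : is_hom f ->
  gen_hom T m v *m f v = gen_hom T (m *m f j) v.
Proof.
move=> hom_f; apply/row_matrixP => a; rewrite row_mul !gen_hom_row -!mulmxA castv_hom.
by rewrite [pathmx M a j *m _]mulmxA -(hom_pathmx _ _ hom_f) !mulmxA.
Qed.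

Lemma gen_hom_pathmx_closed M j T (m : 'rV[K]_(dimv M j)) u s v : m *m pathmx M T j = 0 ->
  (<<gen_hom T m u>> *m pathmx M s u *m castv M (iter s sg u) v
    <= <<gen_hom T m v>>)%MS.
Proof.
move=> /gen_hom_is_hom/hom_pathmx hom_path.
rewrite genmxE -mulmxA (eqmxMr _ (genmxE _)) mulmxA hom_path -mulmxA.
exact: submx_trans (submxMl _ _) (castv_sub _ _ _).
Qed.

Lemma gen_hom_sigma_sub M j T (m : 'rV[K]_(dimv M j)) w :
  (gen_hom T m (sg w) <= m *m castv M j (sg w) + mor M w)%MS.
Proof.
apply/row_subP => -[[|a] lt_aT]; rewrite gen_hom_row /=.
  by rewrite mulmx1 addsmxSl.
rewrite -!mulmxA -castv_mor !mulmxA.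
exact: submx_trans (submxMl _ _) (addsmxSr _ _).
Qed.

Lemma generates_Jpow_zero M j T (m : 'rV[K]_(dimv M j)) s :
  generates T m -> m *m pathmx M s j = 0 -> Jpow_zero M s.
Proof.
move=> gen_m ms0 v; have Gs0 : gen_hom T m v *m pathmx M s v = 0.
  apply/row_matrixP => a; rewrite row0 gen_hom_row_pathmx.
  by rewrite (mulmx_pathmx0_leq ms0) ?mul0mx ?leq_addr.
by rewrite -[pathmx M s v]mul1mx; have [D ->] := submxP (gen_m v); rewrite -mulmxA Gs0 mulmx0.
Qed.

Lemma gen_hom_coef_eq0 M j (m : 'rV[K]_(dimv M j)) L T v (c : 'rV[K]_T) :
  m *m pathmx M L.-1 j != 0 -> m *m pathmx M L j = 0 -> c *m gen_hom T m v = 0 ->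
  forall t : 'I_T, (t < L)%N -> iter t sg j = v -> c 0 t = 0.
Proof.
move=> mL1 mL0 cG0; suff coef0 k (t : 'I_T) :
    (t < k)%N -> (t < L)%N -> iter t sg j = v -> c 0 t = 0.
  by move=> t; apply: (coef0 t.+1).
elim: k t => [//|k IH] t lt_tk lt_tL tv.
have [/IH -> //|le_kt] := ltnP t k.
have := congr1 (mulmx^~ (pathmx M (L.-1 - t) v)) cG0.
rewrite mul0mx -mulmxA mulmx_sum_row (bigD1 t) //= big1 ?addr0; last first.
  move=> a neq_at; rewrite gen_hom_row_pathmx.
  have [lt_ta|le_at] := ltnP t a.
    by rewrite (mulmx_pathmx0_leq mL0) ?mul0mx ?scaler0 //; lia.
  have lt_at : (a < t)%N.
    by rewrite ltn_neqAle le_at andbT; apply: contra neq_at => /eqP/val_inj->.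
  have [av|nav] := eqVneq (iter a sg j) v; first by rewrite IH ?scale0r //; lia.
  rewrite castv_neq ?mulmx0 ?scaler0 // iterD.
  by apply: contra nav => /eqP/iter_sigma_inj ->.
have eL : (L.-1 - t + t = L.-1)%N by lia.
move/eqP; rewrite gen_hom_row_pathmx scaler_eq0 mulmx_castv_eq0; last by rewrite iterD tv.
by rewrite eL (negPf mL1) orbF => /eqP.
Qed.

End GeneratedHom.

Section SimpleTop.
Variables (K : fieldType) (n : nat).
Implicit Types (M : rep K n) (u v w : 'I_n).
Local Notation sg := (@sigma n).

(* The fibres of [simple_rep v] have [nat_of_bool] dimensions; these helpers let us
   reason about a column matrix with [b] columns without deciding [b]. *)
Definition bool_col d (b : bool) (phi : 'cV[K]_d) : 'M[K]_(d, b) :=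
  if b return 'M[K]_(d, b) then phi else 0.

Lemma mxrank_bool_col d b (phi : 'cV[K]_d) :
  \rank (bool_col b phi) = if b then \rank phi else 0%N.
Proof. by case: b => //=; rewrite mxrank0. Qed.

Lemma mulmx_bool_col m d b (A : 'M[K]_(m, d)) (phi : 'cV[K]_d) :
  A *m bool_col b phi = bool_col b (A *m phi).
Proof. by case: b => //=; rewrite mulmx0. Qed.

Lemma bool_col0 d b : bool_col b (0 : 'cV[K]_d) = 0.
Proof. by case: b. Qed.

Lemma kermx_bool_col d b (phi : 'cV[K]_d) :
  (kermx (bool_col b phi) == if b then kermx phi else 1%:M)%MS.
Proof. by case: b => /=; apply/eqmxP; last apply: kermx0. Qed.

Lemma kermx_col_true d (b : bool) (A : 'M[K]_(d, b)) : b -> row_full A ->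
  exists phi : 'cV[K]_d, (kermx A == kermx phi)%MS /\ \rank phi = 1%N.
Proof. by case: b A => // A _ /eqP rA; exists A; rewrite submx_refl. Qed.

Lemma kermx_col_false d (b : bool) (A : 'M[K]_(d, b)) : ~~ b -> (kermx A == 1%:M)%MS.
Proof. by case: b A => // A _; rewrite (thinmx0 A); apply/eqmxP; apply: kermx0. Qed.

(* [M] has top [S_(sg w)] iff the radical of [M] is everything away from [sg w] and is
   the kernel of a nonzero functional at [sg w]; the radical at [sg w] is the image of
   the arrow out of [w]. *)
Definition top_functional M w (phi : 'cV[K]_(dimv M (sg w))) : Prop :=
  [/\ \rank phi = 1%N, (kermx phi == mor M w)%MS &
      forall u, sg u != sg w -> (1%:M <= mor M u)%MS].

Lemma top_isP M w : top_is (sg w) M <-> exists phi, @top_functional M w phi.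
Proof.
split=> [[f [_ [surj_f ker_f]]] | [phi [r_phi ker_phi rad]]].
  have [phi [/eqmxP ker_phi r_phi]] := kermx_col_true (eqxx (sg w)) (surj_f (sg w)).
  exists phi; split=> // [|u neq_u].
    by apply/eqmxP; apply: eqmx_trans (eqmx_sym ker_phi) (eqmxP (ker_f w)).
  by move: (ker_f u) => /eqmxP <-; move: (kermx_col_false (f (sg u)) neq_u) => /eqmxP ->.
exists (fun v => bool_col (v == sg w) (castv M v (sg w) *m phi)); split; [|split].
- move=> u /=; rewrite mulmx_bool_col mulmx0.
  have [/ordS_inj ->|neq_u] := eqVneq (sg u) (sg w); last first.
    by rewrite castv_neq // !mulmx0 bool_col0.
  rewrite castv_id mul1mx (_ : mor M w *m phi = 0) ?bool_col0 //.
  by apply/eqP; rewrite -sub_kermx; move/eqmxP: ker_phi => ->.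
- move=> v; rewrite /row_full mxrank_bool_col /=.
  by have [->|] := eqVneq v (sg w); rewrite //= castv_id mul1mx r_phi.
- move=> u; apply/eqmxP/(eqmx_trans (eqmxP (kermx_bool_col _ _)))/eqmxP.
  have [/ordS_inj ->|neq_u] := eqVneq (sg u) (sg w); first by rewrite castv_id mul1mx.
  by rewrite submx1 rad.
Qed.

End SimpleTop.

Lemma adds_kermx_col (K : fieldType) d (phi : 'cV[K]_d) (y : 'rV[K]_d) :
  y *m phi != 0 -> (1%:M <= y + kermx phi)%MS.
Proof.
move=> yphi; set c := (y *m phi) 0 0.
have yphi_c : y *m phi = c%:M by rewrite [LHS]mx11_scalar.
have c_neq0 : c != 0 by apply: contra yphi => /eqP c0; rewrite yphi_c c0 -scalemx1 scale0r.
rewrite -[1%:M](subrK (phi *m (c^-1 *: y))) addsmxC addmx_sub_adds //.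
  rewrite sub_kermx mulmxBl mul1mx -mulmxA -scalemxAl yphi_c -scalemx1 scalerA.
  by rewrite mulVf // scale1r mulmx1 subrr.
by rewrite -scalemxAr scalemx_sub ?submxMl.
Qed.

Section Nakayama.
Variables (K : fieldType) (n : nat) (Delta : {set 'I_n}).
Hypothesis Delta_neq0 : Delta != set0.
Implicit Types (M : rep K n) (j u v w : 'I_n).
Local Notation sg := (@sigma n).

(* Unfolding the second hypothesis [2 * n] times writes [S v] modulo [R v] as the image
   of paths of length [2 * n], which vanish on modules. *)
Lemma nakayama_sub M (S R : forall v, 'M[K]_(dimv M v)) : is_mod Delta M ->
  (forall u s v, (R u *m pathmx M s u *m castv M (iter s sg u) v <= R v)%MS) ->
  (forall w, (S (sg w) <= R (sg w) + S w *m mor M w)%MS) ->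
  forall v, (S v <= R v)%MS.
Proof.
move=> modM R_closed S_rad.
have descend s v (e : 'rV[K]_(dimv M v)) : (e <= S v)%MS ->
    exists u (e' : 'rV[K]_(dimv M u)), [/\ iter s sg u = v, (e' <= S u)%MS &
      (e - e' *m pathmx M s u *m castv M (iter s sg u) v <= R v)%MS].
  elim: s => [|s IH] in v e *=> eS.
    by exists v, e; rewrite /= castv_id !mulmx1 subrr sub0mx.
  have [u0 [e' [eu e'S er]]] := IH v e eS; have [u eu0] := sigma_surj u0; subst u0.
  have /sub_addsmxP [[c1 c2] /= e'_dec] := submx_trans e'S (S_rad u).
  exists u, (c2 *m S u); split; [by rewrite -iterS iterSr | exact: submxMl |].
  set C := castv M (iter s sg (sg u)) v.
  have -> : e - c2 *m S u *m pathmx M s.+1 u *m castv M (iter s.+1 sg u) v =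
            (e - e' *m pathmx M s (sg u) *m C) + c1 *m (R (sg u) *m pathmx M s (sg u) *m C).
    rewrite e'_dec pathmxSl -!mulmxA castvM -?iterSr // !mulmxDl -!mulmxA.
    by rewrite opprD addrA addrAC subrK.
  by rewrite addmx_sub // (submx_trans (submxMl _ _) (R_closed _ _ _)).
move=> v; apply/row_subP => a.
have [u [e' [_ _]]] := descend (2 * n)%N v (row a (S v)) (row_sub _ _).
by rewrite (mod_pathmx_long Delta_neq0 u modM) ?mulmx0 ?mul0mx ?subr0 //; lia.
Qed.

Lemma top_functional_generates M w (phi : 'cV[K]_(dimv M (sg w))) T
    (y : 'rV[K]_(dimv M (sg w))) :
  is_mod Delta M -> top_functional phi -> y *m phi != 0 ->
  y *m pathmx M T (sg w) = 0 -> generates T y.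
Proof.
move=> modM [_ ker_phi rad] yphi yT0 v.
have T_gt0 : (0 < T)%N by case: T yT0 yphi => //=; rewrite mulmx1 => ->; rewrite mul0mx eqxx.
suff : (1%:M <= <<gen_hom T y v>>)%MS by rewrite genmxE.
apply: (nakayama_sub modM (S := fun=> 1%:M) (R := fun v => <<gen_hom T y v>>%MS))
  => [u s v'|u] /=.
  exact: gen_hom_pathmx_closed.
rewrite mul1mx; have [/ordS_inj ->|neq_u] := eqVneq (sg u) (sg w); last first.
  exact: submx_trans (rad _ neq_u) (addsmxSr _ _).
apply: submx_trans (adds_kermx_col yphi) _.
apply: addsmxS; last by move/eqmxP: ker_phi => ->.
by rewrite genmxE -{1}(row0_gen_hom y T_gt0) row_sub.
Qed.

End Nakayama.

Section Generators.
Variables (K : fieldType) (n : nat).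
Implicit Types (M : rep K n) (j u v w : 'I_n).
Local Notation sg := (@sigma n).

Lemma generates_loewy_length M j T (m : 'rV[K]_(dimv M j)) L :
  generates T m -> m *m pathmx M L.-1 j != 0 -> m *m pathmx M L j = 0 -> loewy_length M L.
Proof.
move=> gen_m mL1 mL0; have L_gt0 : (0 < L)%N by case: L mL1 mL0 => //= /negP nz /eqP/nz.
split=> //; split; first exact: generates_Jpow_zero gen_m mL0.
move=> s /andP [_ lt_sL] Js0; move: mL1.
by rewrite (pathmx0_leq (Js0 j)) ?mulmx0 ?eqxx //; lia.
Qed.

Lemma generates_top_is M j T (m : 'rV[K]_(dimv M j)) L :
  generates T m -> m *m pathmx M L.-1 j != 0 -> m *m pathmx M L j = 0 -> top_is j M.
Proof.
move=> gen_m mL1 mL0; have [w ej] := sigma_surj j; subst j.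
have [L_gt0 [JL _]] := generates_loewy_length gen_m mL1 mL0.
have rad_kill : mor M w *m pathmx M L.-1 (sg w) = 0.
  have := pathmxSl M L.-1 w; rewrite prednK // (JL w) => /esym/eqP.
  by rewrite mulmx_castv_eq0 => [/eqP // |]; rewrite -iterSr prednK.
have m_nrad : ~~ (m <= mor M w)%MS.
  by apply: contra mL1 => /submxP [D ->]; rewrite -mulmxA rad_kill mulmx0.
set C := cokermx (mor M w).
have mC : m *m C != 0 by apply: contra m_nrad; rewrite submxE.
set phi := C *m pinvmx (m *m C).
have mphi : m *m phi != 0.
  rewrite /phi mulmxA; apply: contra mC => /eqP mphi0.
  by rewrite -(mulmxKpV (submx_refl (m *m C))) mphi0 mul0mx.
have r_phi : \rank phi = 1%N.
  apply/eqP; rewrite eqn_leq rank_leq_col lt0n mxrank_eq0.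
  by apply: contra mphi => /eqP ->; rewrite mulmx0.
apply/top_isP; exists phi; split=> // [|u neq_u].
  have rad_ker : (mor M w <= kermx phi)%MS by rewrite sub_kermx mulmxA mulmx_coker mul0mx.
  apply/andP; split=> //; rewrite -(mxrank_leqif_sup rad_ker).2 eqn_leq mxrankS //=.
  have := mxrankS (submx_trans (gen_m (sg w)) (gen_hom_sigma_sub T m w)).
  rewrite castv_id mulmx1 mxrank1 mxrank_ker r_phi.
  have := (mxrank_adds_leqif m (mor M w)).1; have := rank_leq_row m; lia.
have := submx_trans (gen_m (sg u)) (gen_hom_sigma_sub T m u).
by rewrite castv_neq ?mulmx0 ?adds0mx // eq_sym.
Qed.

Lemma generator_pathmx_loewy M j T (m : 'rV[K]_(dimv M j)) k :
  generates T m -> m != 0 -> loewy_length M k ->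
  m *m pathmx M k.-1 j != 0 /\ m *m pathmx M k j = 0.
Proof.
move=> gen_m m_neq0 [k_gt0 [Jk k_min]]; split; last by rewrite Jk mulmx0.
have [k1|k_neq1] := eqVneq k 1; first by rewrite k1 mulmx1.
by apply/eqP => /(generates_Jpow_zero gen_m); apply: k_min; lia.
Qed.

End Generators.

Section Indecomposable.
Variables (K : fieldType) (n : nat) (Delta : {set 'I_n}).
Hypothesis Delta_neq0 : Delta != set0.
Implicit Types (M : rep K n) (j u v w : 'I_n).
Local Notation sg := (@sigma n).

Lemma summand_in_radical_eq0 M w (U V : subT M) : is_mod Delta M ->
  is_sub U -> is_sub V ->
  (forall v, (U v + V v == 1%:M)%MS && (U v :&: V v == (0 : 'M_(dimv M v)))%MS) ->
  (forall u, sg u != sg w -> (1%:M <= mor M u)%MS) ->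
  (V (sg w) <= mor M w)%MS -> forall v, (V v == (0 : 'M_(dimv M v)))%MS.
Proof.
move=> modM subU subV UV rad Vw_rad.
suff V_sub0 v : (V v <= (0 : 'M_(dimv M v)))%MS by move=> v; rewrite V_sub0 sub0mx.
apply: (nakayama_sub Delta_neq0 modM (R := fun v => 0)) => [u s v'|u].
  by rewrite !mul0mx sub0mx.
have V_rad : (V (sg u) <= mor M u)%MS.
  have [/ordS_inj -> //|neq_u] := eqVneq (sg u) (sg w).
  exact: submx_trans (submx1 _) (rad _ neq_u).
have rad_split : (mor M u <= U u *m mor M u + V u *m mor M u)%MS.
  rewrite -addsmxMr -{1}[mor M u]mul1mx submxMr //.
  by case/andP: (UV u) => /andP [].
have : (V (sg u) <= V (sg u) :&: (U u *m mor M u + V u *m mor M u))%MS.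
  by rewrite sub_capmx submx_refl (submx_trans V_rad rad_split).
rewrite -(matrix_modr _ (subV u)) => /submx_trans; apply; apply: addsmxS => //.
case/andP: (UV (sg u)) => _ /andP [UV0 _].
by rewrite capmxC in UV0; apply: submx_trans _ UV0; apply: capmxS (subU u).
Qed.

Lemma top_is_indecomposable M j : is_mod Delta M -> top_is j M -> indecomposable M.
Proof.
have [w <-] := sigma_surj j; move=> modM /top_isP [phi [r_phi ker_phi rad]].
split; first by exists (sg w); rewrite -r_phi rank_leq_row.
move=> U V subU subV UV.
have [U_rad|U_nrad] := boolP (U (sg w) <= mor M w)%MS.
  left; apply: (summand_in_radical_eq0 modM subV subU _ rad U_rad) => v.
  by rewrite addsmxC capmxC.
have [V_rad|V_nrad] := boolP (V (sg w) <= mor M w)%MS.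
  by right; apply: (summand_in_radical_eq0 modM subU subV UV rad V_rad).
(* Otherwise both summands meet the hyperplane [I] in proper subspaces, which together
   would still have to span [I]: ranks do not add up. *)
exfalso; set I := mor M w.
have r_I : \rank I = (dimv M (sg w) - 1)%N by rewrite -(eqmx_rank ker_phi) mxrank_ker r_phi.
have I_split : (I <= (U (sg w) :&: I) + (V (sg w) :&: I))%MS.
  have : (I <= U w *m I + V w *m I)%MS.
    rewrite -addsmxMr -{1}[I]mul1mx submxMr //.
    by case/andP: (UV w) => /andP [].
  by move/submx_trans; apply; apply: addsmxS; rewrite sub_capmx submxMl andbT.
have rank_cap_lt (A : 'M_(dimv M (sg w))) : ~~ (A <= I)%MS -> (\rank (A :&: I)%MS < \rank A)%N.
  move=> A_nrad; have [le_cap eq_cap] := mxrank_leqif_sup (capmxSl A I).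
  rewrite ltn_neqAle le_cap andbT eq_cap; apply: contra A_nrad => /submx_trans; apply.
  exact: capmxSr.
have := rank_cap_lt _ U_nrad; have := rank_cap_lt _ V_nrad.
have := (mxrank_adds_leqif (U (sg w) :&: I)%MS (V (sg w) :&: I)%MS).1.
have := mxrankS I_split; have := mxrank_sum_cap (U (sg w)) (V (sg w)).
case/andP: (UV (sg w)) => /eqmx_rank -> /eqmx0P ->.
rewrite mxrank1 mxrank0 addn0; lia.
Qed.

End Indecomposable.

Section Submodules.
Variables (K : fieldType) (n : nat).
Implicit Types (M : rep K n).
Local Notation sg := (@sigma n).

Definition subrep M (U : subT M) : rep K n :=
  @Rep K n (fun v => \rank (U v))
    (fun v => row_base (U v) *m mor M v *m pinvmx (row_base (U (sg v)))).

Definition subrep_incl M (U : subT M) : homT (subrep U) M := fun v => row_base (U v).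

Lemma subrep_incl_hom M (U : subT M) : is_sub U -> is_hom (subrep_incl U).
Proof.
move=> subU v; rewrite /subrep_incl /= mulmxKpV // !eq_row_base.
by apply: submx_trans (subU v); apply: submxMr; rewrite eq_row_base.
Qed.

Lemma subrep_incl_inj M (U : subT M) : hom_inj (subrep_incl U).
Proof. by move=> v; apply: row_base_free. Qed.

Lemma subrep_incl_im M (U : subT M) v : (subrep_incl U v == U v)%MS.
Proof. by apply/eqmxP; apply: eq_row_base. Qed.

Lemma subrep_is_mod (Delta : {set 'I_n}) M (U : subT M) :
  is_mod Delta M -> is_sub U -> is_mod Delta (subrep U).
Proof.
move=> modM /subrep_incl_hom/hom_pathmx incl_path l l_Delta.
apply: (row_free_inj (subrep_incl_inj U (iter n sg l))).
by rewrite /= mul0mx -incl_path modM ?mulmx0.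
Qed.

Lemma kermx_is_sub M N (f : homT M N) : is_hom f -> is_sub (fun v => kermx (f v)).
Proof. by move=> hom_f v; rewrite sub_kermx -mulmxA hom_f mulmxA mulmx_ker mul0mx. Qed.

End Submodules.

Section Projectives.
Variables (K : fieldType) (n : nat) (Delta : {set 'I_n}).
Hypothesis Delta_neq0 : Delta != set0.
Implicit Types (M P Q X : rep K n) (j v : 'I_n).
Local Notation sg := (@sigma n).
Local Notation rDelta := (rDelta Delta).

Lemma generates_isL M j T (m : 'rV[K]_(dimv M j)) L : is_mod Delta M -> generates T m ->
  m *m pathmx M L.-1 j != 0 -> m *m pathmx M L j = 0 -> isL Delta j L M.
Proof.
move=> modM gen_m mL1 mL0; have top_j := generates_top_is gen_m mL1 mL0.
have indec := top_is_indecomposable Delta_neq0 modM top_j.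
by have := generates_loewy_length gen_m mL1 mL0.
Qed.

Lemma Pe_loewy_length j P : is_Pe Delta j P -> loewy_length P (n + rDelta j).
Proof.
move=> [modP [x Pe_x]]; set L := (n + rDelta j)%N.
have L_gt0 : (0 < L)%N by rewrite addn_gt0 (n_gt0 Delta_neq0).
have lt_L1 : (L.-1 < L)%N by rewrite prednK.
have modC : is_mod Delta (chain_rep (K := K) j L) by apply: chain_rep_is_mod.
have [[f [hom_f xf]] _] := Pe_x _ modC (delta_mx 0 (Ordinal L_gt0)).
have xL0 : x *m pathmx P L j = 0 by rewrite mod_pathmx_rDelta ?mulmx0.
have fg1 v : f v *m gen_hom L x v = 1%:M.
  have [_ uniq] := Pe_x P modP x.
  apply: (uniq (fun v => f v *m gen_hom L x v) (fun=> 1%:M)) => [v'|v'||].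
  - by rewrite mulmxA hom_f -!mulmxA gen_hom_is_hom.
  - by rewrite mulmx1 mul1mx.
  - by rewrite mulmxA xf -rowE row0_gen_hom.
  - by rewrite mulmx1.
have gen_x : generates L x by move=> v; rewrite -(fg1 v) submxMl.
apply: (generates_loewy_length gen_x _ xL0); apply: contraTneq isT => xL1.
have := congr1 (mulmx^~ (f (iter L.-1 sg j))) xL1.
rewrite mul0mx -mulmxA -(hom_pathmx _ _ hom_f) mulmxA xf delta_mx_chain_rep_pathmx.
by move/matrixP/(_ 0 (Ordinal lt_L1)); rewrite !mxE !eqxx => /eqP; rewrite oner_eq0.
Qed.

Lemma proj_cover_lift_generates Q X (p : homT Q X) j T (q : 'rV[K]_(dimv Q j)) :
  proj_cover Delta p -> q *m pathmx Q T j = 0 -> generates T (q *m p j) -> generates T q.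
Proof.
move=> [_ [hom_p [_ superfluous]]] qT0 gen_y v.
have sub_G : is_sub (fun u => <<gen_hom T q u>>%MS).
  move=> u; have := gen_hom_pathmx_closed u 1 (sg u) qT0.
  by rewrite /= mul1mx castv_id mulmx1.
have full_G u : (<<gen_hom T q u>> + kermx (p u) == 1%:M)%MS.
  apply/andP; split; first exact: submx1.
  have [D pD] := submxP (submx_trans (submx1 (p u)) (gen_y u)).
  rewrite -(gen_hom_hom T q u hom_p) mulmxA in pD.
  rewrite -[1%:M](subrK (D *m gen_hom T q u)) addsmxC addmx_sub_adds ?genmxE ?submxMl //.
  by rewrite sub_kermx mulmxBl mul1mx -pD subrr.
by have /andP[_] := superfluous _ sub_G full_G v; rewrite genmxE.
Qed.

(* Projectivity lifts the epimorphism [gen_hom L (q *m p j) : chain_rep j L -> X] along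
   [p] to some [psi]; the e_0-coordinate of [q *m psi j] is 1, so no path of length
   [s < L] kills [q]. *)
Lemma proj_lift_pathmx_neq0 Q X (p : homT Q X) j k (q : 'rV[K]_(dimv Q j)) :
  is_proj Delta Q -> is_mod Delta X -> is_hom p -> generates (n + rDelta j) (q *m p j) ->
  q *m p j *m pathmx X k.-1 j != 0 -> q *m p j *m pathmx X k j = 0 ->
  forall s, (s < n + rDelta j)%N -> q *m pathmx Q s j != 0.
Proof.
move=> [_ projQ] modX hom_p gen_y yk1 yk0; set L := (n + rDelta j)%N.
have L_gt0 : (0 < L)%N by rewrite addn_gt0 (n_gt0 Delta_neq0).
have k_gt0 : (0 < k)%N by case: k yk1 yk0 => //= /negP nz /eqP/nz.
have modC : is_mod Delta (chain_rep (K := K) j L) by apply: chain_rep_is_mod.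
have yL0 : q *m p j *m pathmx X L j = 0 by rewrite mod_pathmx_rDelta ?mulmx0.
have surj_y : hom_surj (gen_hom L (q *m p j) : homT (chain_rep j L) X).
  by move=> v; rewrite -sub1mx gen_y.
have [psi [hom_psi psi_p]] := projQ _ _ _ p modC modX (gen_hom_is_hom yL0) surj_y hom_p.
set u := q *m psi j.
have u0 : u 0 (Ordinal L_gt0) = 1.
  have : (u - delta_mx 0 (Ordinal L_gt0)) *m gen_hom L (q *m p j) j = 0.
    by rewrite mulmxBl -mulmxA psi_p -rowE row0_gen_hom subrr.
  move/gen_hom_coef_eq0 => /(_ _ yk1 yk0 (Ordinal L_gt0) k_gt0 erefl).
  by rewrite !mxE eqxx => /eqP; rewrite subr_eq0 => /eqP.
move=> s lt_sL; apply: contraTneq isT => qs0.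
have := congr1 (mulmx^~ (psi (iter s sg j))) qs0.
rewrite mul0mx -mulmxA -(hom_pathmx _ _ hom_psi) mulmxA -/u chain_rep_pathmx.
move/matrixP/(_ 0 (Ordinal lt_sL)); rewrite !mxE (bigD1 (Ordinal L_gt0)) //= big1 ?addr0.
  by rewrite mxE /= add0n !eqxx orbT u0 mulr1 => /eqP; rewrite oner_eq0.
move=> b neq_b0; rewrite mxE /= -{1}[s]add0n eqn_add2r eq_sym.
rewrite (_ : (b == 0 :> nat) = false) ?mulr0 //.
by apply: contraNF neq_b0 => /eqP b0; apply/eqP/val_inj.
Qed.

(* A kernel vector is a combination of the images of [q] under paths; applying [p], the
   coefficients of the paths of length [< k] vanish since [q *m p j] has exact
   nilpotency [k]. *)
Lemma kermx_sub_gen_hom Q X (p : homT Q X) j k T (q : 'rV[K]_(dimv Q j)) :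
  is_hom p -> generates T q ->
  q *m p j *m pathmx X k.-1 j != 0 -> q *m p j *m pathmx X k j = 0 ->
  forall v, (kermx (p v) <= gen_hom T (q *m pathmx Q k j) v)%MS.
Proof.
move=> hom_p gen_q yk1 yk0 v; apply/row_subP => b; set w := row b (kermx (p v)).
have wp0 : w *m p v = 0 by rewrite /w -row_mul mulmx_ker row0.
have [c wc] := submxP (submx_trans (submx1 w) (gen_q v)).
have cy0 : c *m gen_hom T (q *m p j) v = 0.
  by rewrite -(gen_hom_hom T q v hom_p) mulmxA -wc wp0.
rewrite wc mulmx_sum_row; apply: summx_sub => t _.
have [lt_tk|le_kt] := ltnP t k.
  have [tv|ntv] := eqVneq (iter t sg j) v.
    by rewrite (gen_hom_coef_eq0 yk1 yk0 cy0 lt_tk tv) scale0r sub0mx.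
  by rewrite scalemx_sub // gen_hom_row castv_neq ?mulmx0 ?sub0mx.
have lt_tkT : (t - k < T)%N by have := ltn_ord t; lia.
have -> : row t (gen_hom T q v) = row (Ordinal lt_tkT) (gen_hom T (q *m pathmx Q k j) v).
  rewrite !gen_hom_row /= -[q *m pathmx Q k j *m _]mulmxA pathmxD -!mulmxA.
  by rewrite castvM ?iterD // subnK.
exact/scalemx_sub/row_sub.
Qed.

Lemma subrep_isL M (U : subT M) j T (z : 'rV[K]_(dimv M j)) L :
  is_mod Delta M -> is_sub U -> (z <= U j)%MS -> (forall v, (U v <= gen_hom T z v)%MS) ->
  z *m pathmx M L.-1 j != 0 -> z *m pathmx M L j = 0 -> isL Delta j L (subrep U).
Proof.
move=> modM subU zU U_sub zL1 zL0.
have hom_i := subrep_incl_hom subU; have inj_i := subrep_incl_inj U.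
set zY := z *m pinvmx (subrep_incl U j).
have zYi : zY *m subrep_incl U j = z by rewrite mulmxKpV // eq_row_base.
have zY_path s :
    zY *m pathmx (subrep U) s j *m subrep_incl U (iter s sg j) = z *m pathmx M s j.
  by rewrite -mulmxA -(hom_pathmx _ _ hom_i) mulmxA zYi.
apply: (generates_isL (T := T) (subrep_is_mod modM subU)) => [v||].
- have : (subrep_incl U v <= gen_hom T zY v *m subrep_incl U v)%MS.
    by rewrite gen_hom_hom // zYi (submx_trans _ (U_sub v)) ?eq_row_base.
  case/submxP => D; rewrite mulmxA -{1}[subrep_incl U v]mul1mx.
  by move/(row_free_inj (inj_i v)) ->; apply: submxMl.
- by apply: contra zL1 => /eqP zY0; rewrite -zY_path zY0 mul0mx.
- by apply: (row_free_inj (inj_i _)); rewrite /= zY_path zL0 mul0mx.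
Qed.

Lemma proj_cover_kernel_isL j k X Q (p : homT Q X) :
  (0 < k < n + rDelta j)%N -> isL Delta j k X -> proj_cover Delta p ->
  isL Delta (iter k sg j) (n + rDelta j - k) (subrep (fun v => kermx (p v))).
Proof.
move=> /andP [k_gt0 lt_kL] [modX [_ [topX loewyX]]] cover.
have [[modQ _] [hom_p [surj_p _]]] := cover; set L := (n + rDelta j)%N.
have [w ej] := sigma_surj j; subst j.
have [phi /[dup] top_phi [r_phi _ _]] := proj1 (top_isP X w) topX.
set y : 'rV_(dimv X (sg w)) := pinvmx phi.
have y_phi : y *m phi = 1%:M by rewrite -[y]mul1mx mulmxKpV // sub1mx /row_full r_phi.
have y_phi_neq0 : y *m phi != 0 by rewrite y_phi -[1%:M]/1 oner_neq0.
have y_neq0 : y != 0 by apply: contraNneq y_phi_neq0 => ->; rewrite mul0mx.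
have yL0 : y *m pathmx X L (sg w) = 0 by rewrite mod_pathmx_rDelta ?mulmx0.
have gen_y := top_functional_generates Delta_neq0 modX top_phi y_phi_neq0 yL0.
have [yk1 yk0] := generator_pathmx_loewy gen_y y_neq0 loewyX.
set q := y *m pinvmx (p (sg w)).
have qp : q *m p (sg w) = y by rewrite mulmxKpV // submx_full.
have qL0 : q *m pathmx Q L (sg w) = 0 by rewrite mod_pathmx_rDelta ?mulmx0.
have gen_q : generates L q by apply: proj_cover_lift_generates cover qL0 _; rewrite qp.
rewrite -qp in gen_y yk1 yk0.
have q_neq0 := proj_lift_pathmx_neq0 cover.1 modX hom_p gen_y yk1 yk0.
have z_path s : q *m pathmx Q k (sg w) *m pathmx Q s (iter k sg (sg w)) =
    q *m pathmx Q (s + k) (sg w) *m castv Q _ (iter s sg (iter k sg (sg w))).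
  by rewrite -mulmxA pathmxD mulmxA.
apply: subrep_isL modQ (kermx_is_sub hom_p) _ (kermx_sub_gen_hom hom_p gen_q yk1 yk0) _ _.
- by rewrite sub_kermx -mulmxA -(hom_pathmx _ _ hom_p) mulmxA yk0.
- by rewrite z_path mulmx_castv_eq0 ?iterD // (_ : _ + k = L.-1)%N ?q_neq0 //; lia.
- by rewrite z_path subnK ?(ltnW lt_kL) // qL0 mul0mx.
Qed.

End Projectives.

Theorem lemma4p9 (K : fieldType) (n : nat) (hn : (2 <= n)%N)
  (Delta : {set 'I_n}) (hDelta : Delta != set0) (i : 'I_n) :
  (* (1) *)
  (forall (k : nat) (X : rep K n), isL Delta i k X -> (0 < k < 2 * n)%N) /\
  (* (2) *)
  (forall P : rep K n, is_Pe Delta i P ->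
     (exists r : nat,
        iter r (@sigma n) i \in Delta /\
        (forall r' : nat, (r' < r)%N -> iter r' (@sigma n) i \notin Delta) /\
        loewy_length P (n + r)) /\
     (forall l : nat, loewy_length P l -> (n <= l < 2 * n)%N)) /\
  (* (3) *)
  (forall (P P' : rep K n) (k l : nat),
     is_Pe Delta i P -> is_Pe Delta (iter k (@sigma n) i) P' ->
     loewy_length P l -> (n <= k < l)%N ->
     loewy_length P' (l - (k - n))) /\
  (* (4) *)
  (forall (P : rep K n) (k l : nat), is_Pe Delta i P -> loewy_length P l ->
     (0 < k < l)%N ->
     forall X : rep K n, isL Delta i k X ->
     forall (Q : rep K n) (p : homT Q X), proj_cover Delta p ->
       exists (Y : rep K n) (iota : homT Y Q),
         isL Delta (iter k (@sigma n) i) (l - k) Y /\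
         is_hom iota /\ hom_inj iota /\
         (forall j, (iota j == kermx (p j))%MS)).
Proof.
have Pe_length (P : rep K n) l : is_Pe Delta i P -> loewy_length P l -> l = (n + rDelta Delta i)%N.
  by move=> /(Pe_loewy_length hDelta)/loewy_length_uniq uniq /uniq.
split; first by move=> k X [modX [_ [_ lX]]]; exact: (mod_loewy_length_lt hDelta modX lX).
split.
  move=> P PeP; split=> [|l /(Pe_length _ _ PeP) ->]; last by have := rDelta_lt hDelta i; lia.
  exists (rDelta Delta i); split; first exact: rDelta_in.
  split; last exact: Pe_loewy_length.
  by move=> r' lt_r'; apply: contraTN lt_r' => /(rDelta_min hDelta); rewrite -leqNgt.
split.
  move=> P P' k l PeP PeP' /(Pe_length _ _ PeP) -> /andP [le_nk lt_kl].
  have le_kr : (k - n <= rDelta Delta i)%N by lia.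
  have e : iter k (@sigma n) i = iter (k - n) (@sigma n) i.
    by rewrite -(subnK le_nk) iterD iter_sigma_n subnK.
  by rewrite -addnBA // -(rDelta_iter hDelta le_kr) -e; apply: Pe_loewy_length.
move=> P k l PeP /(Pe_length _ _ PeP) -> k_bounds X LX Q p cover.
exists (subrep (fun v => kermx (p v))), (subrep_incl _).
split; first exact: proj_cover_kernel_isL.
split; first exact/subrep_incl_hom/kermx_is_sub/(cover.2.1).
by split; [apply: subrep_incl_inj | apply: subrep_incl_im].
Qed.
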